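(* Let $A$ be a $3\times3$ skew-symmetric integer matrix whose associated quiver is connected, and let $g\in\mathbb{Z}^3$ be nonzero with $Ag=0$. The graded cluster algebra $\mathcal{A}((x_1,x_2,x_3),A,g)$ has infinitely many occurring degrees if and only if $A$ is mutation-infinite.
   Context: Matrix mutation: $\mu_k(B)=(b'_{ij})$ with $b'_{ij}=-b_{ij}$ if $i=k$ or $j=k$, $b'_{ij}=b_{ij}+\operatorname{sgn}(b_{ik})\max(b_{ik}b_{kj},0)$ otherwise; $B$ is mutation-infinite if infinitely many distinct matrices are obtained from it by finite sequences of mutations. The quiver of $B$ has $b_{ij}$ arrows $i\to j$ when $b_{ij}>0$. A seed $((x_1,x_2,x_3),B)$ mutates in direction $k$ to $(x',\mu_k B)$ with $x'_j=x_j$ ($j\ne k$), $x'_k=\big(\prod_{b_{ik}>0}x_i^{b_{ik}}+\prod_{b_{ik}<0}x_i^{-b_{ik}}\big)/x_k$. Cluster variables are all entries of reachable clusters; grading $\deg x_i=g_i$, and under mutation at $k$ the degree vector becomes $g'$ with $g'_j=g_j$ ($j\ne k$), $g'_k=-g_k+\sum_{b_{ik}>0}b_{ik}g_i$; cluster variables are homogeneous. A degree occurs if some cluster variable has it. *)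

From mathcomp Require Import all_boot all_order all_algebra.
Set Implicit Arguments. Unset Strict Implicit. Unset Printing Implicit Defensive.
Import Order.TTheory GRing.Theory Num.Theory.
Local Open Scope ring_scope.

Notation exmx := 'M[int]_3.
Notation degvec := 'cV[int]_3.

Definition mutmx (k : 'I_3) (B : exmx) : exmx :=
  \matrix_(i, j)
    if (i == k) || (j == k) then - B i j
    else B i j + sgz (B i k) * Num.max (B i k * B k j) 0.

(* Mutation of the degree vector at k, computed with the current matrix B:
   g'_k = -g_k + sum_{b_ik > 0} b_ik g_i, other entries unchanged. *)
Definition mutdeg (k : 'I_3) (B : exmx) (g : degvec) : degvec :=
  \col_j (if j == k then - g k 0 + \sum_(i < 3 | 0 < B i k) B i k * g i 0
          else g j 0).

(* Mutation of a graded seed (matrix, degree vector); the cluster itself is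
   not needed to track degrees. *)
Definition mutseed (k : 'I_3) (s : exmx * degvec) : exmx * degvec :=
  (mutmx k s.1, mutdeg k s.1 s.2).

Definition mutseq (ks : seq 'I_3) (s : exmx * degvec) : exmx * degvec :=
  foldl (fun s k => mutseed k s) s ks.

Definition mutmxseq (ks : seq 'I_3) (B : exmx) : exmx :=
  foldl (fun B k => mutmx k B) B ks.

Definition skew_symmetric (A : exmx) : Prop := A^T = - A.

Definition quiver_connected (A : exmx) : Prop :=
  forall i j : 'I_3, connect [rel a b | (A a b != 0) || (A b a != 0)] i j.

Definition mutation_infinite (B : exmx) : Prop :=
  ~ exists l : seq exmx, forall ks : seq 'I_3, mutmxseq ks B \in l.

(* d is a degree occurring in the graded cluster algebra A((x1,x2,x3),B,g):
   some cluster variable (an entry of a reachable graded seed) has degree d *)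
Definition occurs_degree (B : exmx) (g : degvec) (d : int) : Prop :=
  exists (ks : seq 'I_3) (i : 'I_3), (mutseq ks (B, g)).2 i 0 = d.

Definition infinitely_many_degrees (B : exmx) (g : degvec) : Prop :=
  ~ exists l : seq int, forall d, occurs_degree B g d -> d \in l.

From mathcomp Require Import all_boot all_order all_algebra zify.
Set Implicit Arguments. Unset Strict Implicit. Unset Printing Implicit Defensive.
Import Order.TTheory GRing.Theory Num.Theory.
Local Open Scope ring_scope.

(* A skew-symmetric 3 x 3 matrix B is determined by the vector
   w(B) = (b_23, b_31, b_12) spanning its kernel, and a single mutation maps
   the degree vector w(B) to -w(mu_k B).  As mutation is linear in the degree
   vector and g is a rational multiple of w(A) (A is nonzero since its quiver
   is connected), every reachable degree vector is, up to the fixed scalar and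
   a sign, the vector w of the reachable matrix.  Hence the occurring degrees
   form a finite set exactly when the reachable matrices do. *)

Local Notation i0 := (@Ordinal 3 0 isT).
Local Notation i1 := (@Ordinal 3 1 isT).
Local Notation i2 := (@Ordinal 3 2 isT).

Lemma ord3P (i : 'I_3) : [\/ i = i0, i = i1 | i = i2].
Proof.
by case: i => [[|[|[|i]]] lti] //; [constructor 1 | constructor 2 | constructor 3];
  apply: val_inj.
Qed.

Lemma sum3 (V : nmodType) (F : 'I_3 -> V) : \sum_(i < 3) F i = F i0 + F i1 + F i2.
Proof.
rewrite !big_ord_recl big_ord0 addr0 addrA.
by congr (F _ + F _ + F _); apply: val_inj.
Qed.

(* Unlike [ordS], [succ3] evaluates to the literal ordinals above. *)
Definition succ3 (i : 'I_3) : 'I_3 :=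
  match nat_of_ord i with 0 => i1 | 1 => i2 | _ => i0 end.

Lemma succ3K (i : 'I_3) : succ3 (succ3 (succ3 i)) = i.
Proof. by case: (ord3P i) => ->. Qed.

Definition kervec (B : exmx) : degvec := \col_i B (succ3 i) (succ3 (succ3 i)).

Definition skewmx (w : degvec) : exmx :=
  \matrix_(i, j) if j == succ3 i then w (succ3 j) 0
                 else if i == succ3 j then - w (succ3 i) 0 else 0.

Lemma kervecK w : kervec (skewmx w) = w.
Proof. by apply/matrixP => i j; rewrite ord1 !mxE eqxx succ3K. Qed.

Lemma skewmx0 : skewmx 0 = 0.
Proof.
by apply/matrixP => i j; rewrite !mxE; repeat case: ifP => _; rewrite ?mxE ?oppr0.
Qed.

Lemma skew_entryN B i j : skew_symmetric B -> B j i = - B i j.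
Proof. by move/matrixP/(_ i j); rewrite !mxE. Qed.

Lemma skew_diag B i : skew_symmetric B -> B i i = 0.
Proof. by move/(skew_entryN i i); lia. Qed.

Lemma skewmx_kervec B : skew_symmetric B -> skewmx (kervec B) = B.
Proof.
move=> skB; apply/matrixP => i j; rewrite !mxE.
case: (ord3P i) => ->; case: (ord3P j) => ->; rewrite /succ3 /=.
all: by rewrite ?(skew_diag _ skB) 1?(skew_entryN _ _ skB) ?opprK.
Qed.

Lemma kervec_neq0 B : skew_symmetric B -> B != 0 -> kervec B != 0.
Proof.
move=> skB; apply: contraNneq => kB0.
by rewrite -(skewmx_kervec skB) kB0 skewmx0.
Qed.

Lemma quiver_connected_neq0 A : quiver_connected A -> A != 0.
Proof.
move=> connA; apply/eqP => A0; case/connectP: (connA ord0 ord_max) => -[|i p] /=.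
  by move=> _ /(congr1 val).
by rewrite A0 !mxE eqxx.
Qed.

Lemma skewmx_ker w (g : degvec) i : skewmx w *m g = 0 -> w i 0 *: g = g i 0 *: w.
Proof.
move/matrixP=> wg; apply/matrixP => j c; rewrite ord1 !mxE.
have := wg i0 0; have := wg i1 0; have := wg i2 0; rewrite !mxE !sum3 !mxE /succ3 /=.
case: (ord3P i) => ->; case: (ord3P j) => ->.
all: move: (w i0 0) (w i1 0) (w i2 0) (g i0 0) (g i1 0) (g i2 0) => *; nia.
Qed.

Lemma sgz_max_mulC (a b : int) :
  sgz a * Num.max (a * b) 0 = sgz b * Num.max (a * b) 0.
Proof. by rewrite /sgz /Order.max /=; repeat case: ifP => ?; nia. Qed.

Lemma mutmx_skew k B : skew_symmetric B -> skew_symmetric (mutmx k B).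
Proof.
move=> skB; apply/matrixP => i j; rewrite !mxE orbC.
have N u v : B v u = - B u v by exact: skew_entryN.
case: ifP => _; first by rewrite N.
rewrite [B j i]N [B j k]N [B k i]N sgzN mulNr mulrNN [B k j * _]mulrC sgz_max_mulC.
by rewrite opprD.
Qed.

Lemma mutdeg_skewmx k w : mutdeg k (skewmx w) w = - kervec (mutmx k (skewmx w)).
Proof.
apply/matrixP => i j; rewrite ord1 !mxE big_mkcond sum3 !mxE.
case: (ord3P k) => ->; case: (ord3P i) => ->; rewrite /succ3 /= ?opprK //.
all: by rewrite /sgz /Order.max /=; repeat case: ifP => ?; nia.
Qed.

Lemma mutdeg_kervec k B :
  skew_symmetric B -> mutdeg k B (kervec B) = - kervec (mutmx k B).
Proof. by move=> skB; rewrite -(skewmx_kervec skB) kervecK mutdeg_skewmx. Qed.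

Lemma mutdegZ k B a g : mutdeg k B (a *: g) = a *: mutdeg k B g.
Proof.
apply/matrixP => i j; rewrite !mxE; case: ifP => // _.
rewrite mulrDr mulrN mulr_sumr; congr (_ + _); apply: eq_bigr => r _.
by rewrite mxE mulrCA.
Qed.

Lemma mutseq_cons k ks s : mutseq (k :: ks) s = mutseq ks (mutseed k s).
Proof. by []. Qed.

Lemma mutmxseq_cons k ks B : mutmxseq (k :: ks) B = mutmxseq ks (mutmx k B).
Proof. by []. Qed.

Lemma mutmxseq_skew ks B : skew_symmetric B -> skew_symmetric (mutmxseq ks B).
Proof. by elim: ks B => [|k ks IH] B skB //; exact/IH/mutmx_skew. Qed.

Lemma mutseqZ ks B a g : (mutseq ks (B, a *: g)).2 = a *: (mutseq ks (B, g)).2.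
Proof.
by elim: ks B g => [|k ks IH] B g //; rewrite !mutseq_cons /mutseed /= mutdegZ IH.
Qed.

Lemma mutseq_kervec ks B : skew_symmetric B ->
  (mutseq ks (B, kervec B)).2 = (-1) ^+ size ks *: kervec (mutmxseq ks B).
Proof.
elim: ks B => [|k ks IH] B skB; first by rewrite scale1r.
rewrite mutseq_cons mutmxseq_cons /mutseed /= mutdeg_kervec // -scaleN1r mutseqZ.
rewrite IH; last exact: mutmx_skew.
by rewrite exprS -scalerA scaleN1r.
Qed.

Lemma mutseq_scaled ks A g d m : skew_symmetric A -> d *: g = m *: kervec A ->
  d *: (mutseq ks (A, g)).2 = ((-1) ^+ odd (size ks) * m) *: kervec (mutmxseq ks A).
Proof.
by move=> skA dg; rewrite -mutseqZ dg mutseqZ mutseq_kervec // scalerA signr_odd mulrC.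
Qed.

Lemma scalemx_eq_divz m n (a b : int) (v w : 'M[int]_(m, n)) :
  a != 0 -> a *: v = b *: w -> v = map_mx (fun x => (b * x) %/ a)%Z w.
Proof.
move=> a_neq0 /matrixP vw; apply/matrixP => i j.
by move: (vw i j); rewrite !mxE => <-; rewrite mulKz.
Qed.

Definition finite_range (I : Type) (T : eqType) (f : I -> T) : Prop :=
  exists l : seq T, forall x, f x \in l.

Lemma finite_range_factor (I : Type) (T U : eqType) (C : finType)
    (f : I -> U) (h : I -> T) (c : I -> C) (phi : T -> C -> U) :
  (forall x, f x = phi (h x) (c x)) -> finite_range h -> finite_range f.
Proof.
move=> fE [l hl]; exists [seq phi t b | t <- l, b <- enum C] => x.
by rewrite fE; apply: allpairs_f; rewrite ?mem_enum.
Qed.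

Lemma finite_range_mx (I : Type) (T : choiceType) m n (f : I -> 'M[T]_(m, n)) :
  finite_range (fun p : I * ('I_m * 'I_n) => f p.1 p.2.1 p.2.2) -> finite_range f.
Proof.
case=> l fl; exists [seq map_mx val M | M : 'M[seq_sub l]_(m, n)] => x.
have -> : f x = map_mx val (\matrix_(i, j) SeqSub (fl (x, (i, j)))).
  by apply/matrixP => i j; rewrite !mxE.
exact: map_f (mem_enum _ _).
Qed.

Lemma infinitely_many_degreesE B g :
  infinitely_many_degrees B g <-> ~ finite_range (fun ks => (mutseq ks (B, g)).2).
Proof.
split; apply: contra_not => -[l fl].
- exists [seq v i 0 | v : degvec <- l, i : 'I_3 <- enum 'I_3] => _ [ks [i <-]].
  by apply: allpairs_f; rewrite ?mem_enum.
- apply: finite_range_mx; exists l => -[ks [i j]] /=.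
  by rewrite [j]ord1; apply: fl; exists ks, i.
Qed.

Theorem mainTheorem11 (A : 'M[int]_3) (g : 'cV[int]_3) :
  skew_symmetric A -> quiver_connected A -> g != 0 -> A *m g = 0 ->
  (infinitely_many_degrees A g <-> mutation_infinite A).
Proof.
move=> skA connA g_neq0 Ag0.
have /matrix0Pn[i [j]] := kervec_neq0 skA (quiver_connected_neq0 connA).
rewrite [j]ord1 => d_neq0; set d := kervec A i 0; set m := g i 0.
have dg : d *: g = m *: kervec A by apply: skewmx_ker; rewrite skewmx_kervec.
have m_neq0 : m != 0.
  apply: contraNneq g_neq0 => m0.
  by move/eqP: dg; rewrite m0 scale0r scalemx_eq0 (negbTE d_neq0).
have scaled ks := mutseq_scaled ks skA dg.
have s_neq0 (ks : seq 'I_3) : (-1) ^+ odd (size ks) * m != 0.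
  by rewrite mulf_neq0 ?signr_eq0.
rewrite infinitely_many_degreesE /mutation_infinite; split; apply: contra_not.
- apply: (finite_range_factor (c := fun ks => odd (size ks))
    (phi := fun B b => map_mx (fun x => ((-1) ^+ b * m * x) %/ d)%Z (kervec B))) => ks.
  exact: scalemx_eq_divz (scaled ks).
- apply: (finite_range_factor (c := fun ks => odd (size ks))
    (phi := fun v b => skewmx (map_mx (fun x => (d * x) %/ ((-1) ^+ b * m))%Z v))) => ks.
  rewrite -(scalemx_eq_divz (s_neq0 ks) (esym (scaled ks))).
  by rewrite skewmx_kervec //; apply: mutmxseq_skew.
Qed.
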